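(* Let $d_R\ge2$, let the glue code $H_G$ be compatible with the memory via $S,T$ and finely devised for $\Sigma$, and let $\gamma$ satisfy $J_{X,C}S^{\mathrm T}=\gamma H_G$. Let $P=P_{M\text{-}M}$ be the matrix such that $xP$ places $x\in\mathbb F_2^n$ on block $u_0$ and zeros elsewhere (so $yP^{\mathrm T}$ is the restriction of $y$ to $u_0$). Then $\mathrm{rs}H_X=\mathrm{rs}(H^{M\text{-}M}_XP^{\mathrm T})$, $\mathrm{rs}(H_ZP)\subseteq\mathrm{rs}H^{M\text{-}M}_Z$, $\mathrm{rs}J_{X,C}=\mathrm{rs}(J^{M\text{-}M}_XP^{\mathrm T})$, $\mathrm{rs}(J_{Z,C}P)=\mathrm{rs}J^{M\text{-}M}_Z$, and $\mathrm{rs}(J_{Z,A}P)\subseteq\mathrm{rs}H^{M\text{-}M}_Z$.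
   Context: All vectors are row vectors over $\mathbb F_2$; $\mathrm{rs}A$ is the row space, $\ker A=\{x:Ax^{\mathrm T}=0\}$, $VM=\{vM:v\in V\}$, $E_m$ the identity. The memory is a CSS subsystem code specified by $H_X\in\mathbb F_2^{r_X\times n}$, $H_Z\in\mathbb F_2^{r_Z\times n}$, $J_X,J_Z\in\mathbb F_2^{k\times n}$, $F_X,F_Z\in\mathbb F_2^{k_g\times n}$ satisfying $\ker H_X=\mathrm{rs}H_Z\oplus\mathrm{rs}J_Z\oplus\mathrm{rs}F_Z$, $\ker H_Z=\mathrm{rs}H_X\oplus\mathrm{rs}J_X\oplus\mathrm{rs}F_X$, $J_XJ_Z^{\mathrm T}=E_k$, $F_XF_Z^{\mathrm T}=E_{k_g}$. Let $v_1,\dots,v_q\in\mathrm{rs}J_Z$ be linearly independent (representing $\Sigma$), $J_{Z,A}$ the matrix with rows $v_1,\dots,v_q$; extend to a basis $v_1,\dots,v_k$ of $\mathrm{rs}J_Z$ and let $J_{Z,C}$ have rows $v_{q+1},\dots,v_k$. Let $\bar J_Z$ be the invertible $k\times k$ matrix with $\binom{J_{Z,A}}{J_{Z,C}}=\bar J_ZJ_Z$ and define $J_{X,A}\in\mathbb F_2^{q\times n}$, $J_{X,C}\in\mathbb F_2^{(k-q)\times n}$ by $\binom{J_{X,A}}{J_{X,C}}=(\bar J_Z^{-1})^{\mathrm T}J_X$. A glue code $H_G\in\mathbb F_2^{r_G\times n_G}$ is compatible via pasting matrices $S\in\mathbb F_2^{n_G\times n}$, $T\in\mathbb F_2^{r_X\times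 r_G}$ if $H_XS^{\mathrm T}=TH_G$; it is finely devised for $\Sigma$ if there exist $u_1,u_2,\dots\in\mathrm{rs}H_Z\oplus\mathrm{rs}F_Z$ with $\mathrm{span}(v_1,\dots,v_q,u_1,u_2,\dots)=(\ker H_G)S$. Measurement-sticker deformed code: coordinates are split into blocks $u_0\in\mathbb F_2^n$, $u_1,\dots,u_{d_R-1}\in\mathbb F_2^{n_G}$, $w_1,\dots,w_{d_R}\in\mathbb F_2^{r_G}$. $H^{M\text{-}M}_X$ has row-block $0$ equal to $H_X$ on $u_0$ and $T$ on $w_1$, and for $1\le j\le d_R-1$ row-block $j$ equal to $H_G$ on $u_j$, $E_{r_G}$ on $w_j$ and $E_{r_G}$ on $w_{j+1}$ (zero elsewhere). $H^{M\text{-}M}_Z$ has row-block $0$ equal to $H_Z$ on $u_0$, and for $1\le i\le d_R$ row-block $i$ equal to $S$ on $u_0$ (only if $i=1$), $E_{n_G}$ on $u_{i-1}$ (only if $i\ge2$), $E_{n_G}$ on $u_i$ (only if $i\le d_R-1$), and $H_G^{\mathrm T}$ on $w_i$. $J^{M\text{-}M}_X$ equals $J_{X,C}$ on $u_0$, $J_{X,C}S^{\mathrm T}$ on each of $u_1,\dots,u_{d_R-1}$, $0$ on $w_1,\dots,w_{d_R-1}$ and $\gamma$ on $w_{d_R}$; $J^{M\text{-}M}_Z$ equals $J_{Z,C}$ on $u_0$ and $0$ elsewhere. *)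

From mathcomp Require Import all_boot all_algebra.
Set Implicit Arguments. Unset Strict Implicit. Unset Printing Implicit Defensive.
Import GRing.Theory.
Local Open Scope ring_scope.

Notation F2 := 'F_2.

(* entry of a matrix addressed by natural-number indices (0 if out of range;
   only ever used in range below) *)
Definition ent {m n} (A : 'M[F2]_(m, n)) (i j : nat) : F2 :=
  match @insub _ (fun x => x < m)%N _ i, @insub _ (fun x => x < n)%N _ j with
  | Some i', Some j' => A i' j'
  | _, _ => 0
  end.

(* Coordinates of the measurement-sticker deformed code, in the order
   u_0 (n coords) | u_1 .. u_{dR-1} (nG coords each) | w_1 .. w_{dR} (rG coords each). *)
Inductive blk := BU0 (o : nat) | BU (j o : nat) | BW (i o : nat).

Definition nMM (n nG rG dR : nat) : nat := (n + (dR - 1) * nG + dR * rG)%N.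

Definition col_dec (n nG : nat) (rG dR : nat) (c : nat) : blk :=
  if (c < n)%N then BU0 c
  else let c1 := (c - n)%N in
  if (c1 < (dR - 1) * nG)%N then BU (c1 %/ nG).+1 (c1 %% nG)
  else let c2 := (c1 - (dR - 1) * nG)%N in BW (c2 %/ rG).+1 (c2 %% rG).

Definition row_dec (r0 b : nat) (r : nat) : nat * nat :=
  if (r < r0)%N then (0%N, r) else (((r - r0) %/ b).+1, (r - r0) %% b)%N.

Definition idE (o o' : nat) : F2 := (o == o')%:R.

Definition HX_MM {n rX nG rG} (dR : nat) (HX : 'M[F2]_(rX, n)) (HG : 'M[F2]_(rG, nG))
  (T : 'M[F2]_(rX, rG)) : 'M[F2]_(rX + (dR - 1) * rG, nMM n nG rG dR) :=
  \matrix_(r, c)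
   match row_dec rX rG r, col_dec n nG rG dR c with
   | (0, o), BU0 o' => ent HX o o'
   | (0, o), BW i o' => if i == 1%N then ent T o o' else 0
   | (j.+1, o), BU j' o' => if j' == j.+1 then ent HG o o' else 0
   | (j.+1, o), BW i o' => if (i == j.+1) || (i == j.+2) then idE o o' else 0
   | _, _ => 0
   end.

Definition HZ_MM {n rZ nG rG} (dR : nat) (HZ : 'M[F2]_(rZ, n)) (HG : 'M[F2]_(rG, nG))
  (S : 'M[F2]_(nG, n)) : 'M[F2]_(rZ + dR * nG, nMM n nG rG dR) :=
  \matrix_(r, c)
   match row_dec rZ nG r, col_dec n nG rG dR c with
   | (0, o), BU0 o' => ent HZ o o'
   | (i.+1, o), BU0 o' => if i == 0%N then ent S o o' else 0
   | (i.+1, o), BU j o' => if (j.+1 == i.+1) || (j == i.+1) then idE o o' else 0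
   | (i.+1, o), BW i' o' => if i' == i.+1 then ent HG o' o (* H_G^T *) else 0
   | _, _ => 0
   end.

Definition JX_MM {n kc nG rG} (dR : nat) (JXC : 'M[F2]_(kc, n)) (S : 'M[F2]_(nG, n))
  (gamma : 'M[F2]_(kc, rG)) : 'M[F2]_(kc, nMM n nG rG dR) :=
  \matrix_(r, c)
   match col_dec n nG rG dR c with
   | BU0 o' => ent JXC r o'
   | BU _ o' => ent (JXC *m S^T) r o'
   | BW i o' => if i == dR then ent gamma r o' else 0
   end.

Definition JZ_MM {n kc nG rG} (dR : nat) (JZC : 'M[F2]_(kc, n)) : 'M[F2]_(kc, nMM n nG rG dR) :=
  \matrix_(r, c)
   match col_dec n nG rG dR c with
   | BU0 o' => ent JZC r o'
   | _ => 0
   end.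

Definition P_MM (n nG rG dR : nat) : 'M[F2]_(n, nMM n nG rG dR) :=
  \matrix_(i, c) ((i : nat) == (c : nat))%:R.

From mathcomp Require Import all_boot all_algebra.
From mathcomp Require Import zify.
Set Implicit Arguments. Unset Strict Implicit. Unset Printing Implicit Defensive.
Import GRing.Theory.
Local Open Scope ring_scope.

(* Restricting to the block u_0 undoes the deformation: H_X^{M-M} restricts to H_X padded
   with zero rows, J_X^{M-M} to J_{X,C}, and the first r_Z rows of H_Z^{M-M} as well as
   J_Z^{M-M} are H_Z and J_{Z,C} placed on u_0.  Fineness puts the rows of J_{Z,A} in
   (ker H_G) S.  For x with x H_G^T = 0, combining the row-blocks 1..d_R of H_Z^{M-M} with
   coefficients x yields xS on u_0, every u_j twice (hence 0 over F_2) and x H_G^T = 0 on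
   every w_i, i.e. exactly xS placed on u_0. *)

Lemma F2_addrr (x : F2) : x + x = 0.
Proof. by case: x => -[|[|[]]] //= h; apply/val_inj. Qed.

Lemma ent_ord m n (A : 'M[F2]_(m, n)) (a : 'I_m) (b : 'I_n) : ent A a b = A a b.
Proof. by rewrite /ent !valK. Qed.

Lemma sum_if_nat_eq (R : nmodType) m (a : R) j (hj : (j < m)%N) :
  \sum_(i < m) (if (i : nat) == j then a else 0) = a.
Proof. by rewrite -big_mkcond /= (big_pred1 (Ordinal hj)). Qed.

Lemma sum_mul_nat_delta (R : pzSemiRingType) m (f : 'I_m -> R) (k : 'I_m) :
  \sum_(i < m) f i * ((i : nat) == k)%:R = f k.
Proof.
rewrite (eq_bigr (fun i : 'I_m => if (i : nat) == k then f k else 0)).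
  exact: sum_if_nat_eq.
by move=> i _; case: eqP => [/val_inj->|_]; rewrite ?mulr1 ?mulr0.
Qed.

Lemma row_dec_head r0 b r : (r < r0)%N -> row_dec r0 b r = (0%N, r).
Proof. by rewrite /row_dec => ->. Qed.

Lemma row_dec_block r0 b i o : (o < b)%N -> row_dec r0 b (r0 + (i * b + o)) = (i.+1, o).
Proof.
move=> hob; rewrite /row_dec ltnNge leq_addr /= addKn.
have hb : (0 < b)%N by apply: leq_ltn_trans hob.
by rewrite divnMDl // divn_small // addn0 modnMDl modn_small.
Qed.

Lemma col_dec_u0 n nG rG dR c : (c < n)%N -> col_dec n nG rG dR c = BU0 c.
Proof. by rewrite /col_dec => ->. Qed.

Variant col_dec_spec (n nG rG dR c : nat) : blk -> Type :=
| ColU0 of (c < n)%N : col_dec_spec n nG rG dR c (BU0 c)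
| ColU j o of (n <= c)%N & (0 < j)%N & (j < dR)%N & (o < nG)%N :
    col_dec_spec n nG rG dR c (BU j o)
| ColW i o of (n <= c)%N & (0 < i)%N & (i <= dR)%N & (o < rG)%N :
    col_dec_spec n nG rG dR c (BW i o).

Lemma col_decP n nG rG dR c :
  (c < nMM n nG rG dR)%N -> col_dec_spec n nG rG dR c (col_dec n nG rG dR c).
Proof.
rewrite /nMM /col_dec => hc.
case: ifP => hn; first by constructor.
have hnc : (n <= c)%N by rewrite leqNgt hn.
case: ifP => hu.
  have hG : (0 < nG)%N by move: hu; case: (nG) => //; rewrite muln0.
  constructor => //; last by rewrite ltn_pmod.
  by have := hu; rewrite -ltn_divLR // => hd; lia.
have hw : (c - n - (dR - 1) * nG < dR * rG)%N.
  move: hc hnc; rewrite ltn_subLR //; last lia.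
  by move/negbT: hu; rewrite -leqNgt => hu; lia.
have hG : (0 < rG)%N by move: hw; case: (rG) => //; rewrite muln0.
constructor => //; last by rewrite ltn_pmod.
by rewrite ltn_divLR // mulnC.
Qed.

Section LiftToU0.
Variables (n nG rG dR m : nat).
Local Notation N := (nMM n nG rG dR).
Local Notation P := (P_MM n nG rG dR).

Lemma leq_n_nMM : (n <= N)%N.
Proof. by rewrite /nMM -addnA leq_addr. Qed.

Lemma mulmx_trP_MM (M : 'M[F2]_(m, N)) r (i : 'I_n) :
  (M *m P^T) r i = M r (widen_ord leq_n_nMM i).
Proof.
rewrite mxE -(sum_mul_nat_delta (M r) (widen_ord leq_n_nMM i)).
by apply: eq_bigr => k _; rewrite !mxE eq_sym.
Qed.

Lemma mulmx_P_MM_u0 (M : 'M[F2]_(m, n)) r (c : 'I_N) (hc : (c < n)%N) :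
  (M *m P) r c = M r (Ordinal hc).
Proof.
by rewrite mxE -(sum_mul_nat_delta (M r) (Ordinal hc)); apply: eq_bigr => k _; rewrite mxE.
Qed.

Lemma mulmx_P_MM_out (M : 'M[F2]_(m, n)) r (c : 'I_N) :
  (n <= c)%N -> (M *m P) r c = 0.
Proof.
move=> hc; rewrite mxE big1 // => k _; rewrite mxE; case: eqP => [e|_]; last by rewrite mulr0.
by have := ltn_ord k; rewrite e ltnNge hc.
Qed.

End LiftToU0.

Lemma HX_MM_trP n rX nG rG dR (HX : 'M[F2]_(rX, n)) (HG : 'M[F2]_(rG, nG))
    (T : 'M[F2]_(rX, rG)) :
  HX_MM dR HX HG T *m (P_MM n nG rG dR)^T = col_mx HX 0.
Proof.
apply/matrixP => r i; rewrite mulmx_trP_MM mxE /= col_dec_u0 //.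
case: (split_ordP r) => r' ->; first by rewrite col_mxEu /= row_dec_head // ent_ord.
by rewrite col_mxEd mxE /= /row_dec ltnNge leq_addr.
Qed.

Lemma usubmx_HZ_MM n rZ nG rG dR (HZ : 'M[F2]_(rZ, n)) (HG : 'M[F2]_(rG, nG))
    (S : 'M[F2]_(nG, n)) :
  usubmx (HZ_MM dR HZ HG S) = HZ *m P_MM n nG rG dR.
Proof.
apply/matrixP => r c; rewrite [LHS]mxE [LHS]mxE /= row_dec_head //.
case: (ltnP c n) => hc.
  by rewrite mulmx_P_MM_u0 col_dec_u0 // (ent_ord HZ r (Ordinal hc)).
rewrite mulmx_P_MM_out //.
by case: (col_decP (ltn_ord c)) => //; rewrite ltnNge hc.
Qed.

Lemma JX_MM_trP n kc nG rG dR (JXC : 'M[F2]_(kc, n)) (S : 'M[F2]_(nG, n))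
    (gamma : 'M[F2]_(kc, rG)) :
  JX_MM dR JXC S gamma *m (P_MM n nG rG dR)^T = JXC.
Proof. by apply/matrixP => r i; rewrite mulmx_trP_MM mxE /= col_dec_u0 // ent_ord. Qed.

Lemma JZ_MM_P n kc nG rG dR (JZC : 'M[F2]_(kc, n)) :
  JZC *m P_MM n nG rG dR = JZ_MM (nG:=nG) (rG:=rG) dR JZC.
Proof.
apply/matrixP => r c; rewrite [RHS]mxE.
case: (col_decP (ltn_ord c)) => [hc|j o hc _ _ _|i o hc _ _ _].
- by rewrite mulmx_P_MM_u0 (ent_ord JZC r (Ordinal hc)).
- exact: mulmx_P_MM_out.
- exact: mulmx_P_MM_out.
Qed.

Section GlueRows.
Variables (n rZ nG rG dR : nat).
Variables (HZ : 'M[F2]_(rZ, n)) (HG : 'M[F2]_(rG, nG)) (S : 'M[F2]_(nG, n)).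
Hypothesis dR_gt0 : (0 < dR)%N.
Local Notation HZMM := (HZ_MM dR HZ HG S).

Lemma HZ_MM_row_subproof (i : 'I_dR) (o : 'I_nG) : (rZ + (i * nG + o) < rZ + dR * nG)%N.
Proof.
rewrite ltn_add2l (leq_trans (_ : _ < i.+1 * nG)%N) //.
  by rewrite mulSnr ltn_add2l.
by rewrite leq_mul2r ltn_ord orbT.
Qed.

Definition HZ_MM_row (i : 'I_dR) (o : 'I_nG) : 'I_(rZ + dR * nG) :=
  Ordinal (HZ_MM_row_subproof i o).

Lemma sum_glue_blocksE o c :
  (\sum_(i < dR) rowsub (HZ_MM_row i) HZMM) o c =
  match col_dec n nG rG dR c with
  | BU0 o' => ent S o o'
  | BU _ _ => 0
  | BW _ o' => ent HG o' o
  end.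
Proof.
rewrite summxE; under eq_bigr => i _ do rewrite !mxE /= row_dec_block //.
case: (col_decP (ltn_ord c)) => [hc|j o' _ hj0 hjd _|i' o' _ hi0 hid _].
- by rewrite sum_if_nat_eq.
- rewrite (eq_bigr (fun i : 'I_dR => (if (i : nat) == j then idE o o' else 0)
                                   + (if (i : nat) == j.-1 then idE o o' else 0))).
    by rewrite big_split /= !sum_if_nat_eq ?F2_addrr // (leq_ltn_trans (leq_pred j)).
  move=> i _; rewrite eqSS -[j in j == i.+1](prednK hj0) eqSS (eq_sym j) (eq_sym j.-1).
  by case: eqP => [->|_]; [rewrite gtn_eqF ?ltn_predL // addr0 | rewrite add0r].
- rewrite (eq_bigr (fun i : 'I_dR => if (i : nat) == i'.-1 then ent HG o' o else 0)).
    by rewrite sum_if_nat_eq // prednK.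
  by move=> i _; rewrite -[i' in i' == _](prednK hi0) eqSS eq_sym.
Qed.

Lemma mulmx_sum_glue_blocks (x : 'rV[F2]_nG) : x *m HG^T = 0 ->
  x *m \sum_(i < dR) rowsub (HZ_MM_row i) HZMM = x *m S *m P_MM n nG rG dR.
Proof.
move=> hx; apply/rowP => c; rewrite mxE; under eq_bigr => o _ do rewrite sum_glue_blocksE.
case: (col_decP (ltn_ord c)) => [hc|j o' hc _ _ _|i o' hc _ _ ho'].
- by rewrite mulmx_P_MM_u0 mxE; apply: eq_bigr => o _; rewrite (ent_ord S o (Ordinal hc)).
- by rewrite mulmx_P_MM_out // big1 // => o _; rewrite mulr0.
- have /rowP/(_ (Ordinal ho')) := hx; rewrite [RHS]mxE mxE => hx0.
  rewrite mulmx_P_MM_out //; apply: etrans hx0.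
  by apply: eq_bigr => o _; rewrite !mxE (ent_ord HG (Ordinal ho') o).
Qed.

Lemma kerHG_lift_sub_HZ_MM (x : 'rV[F2]_nG) : x *m HG^T = 0 ->
  (x *m S *m P_MM n nG rG dR <= HZMM)%MS.
Proof.
move/mulmx_sum_glue_blocks <-; rewrite mulmx_sumr.
by apply: summx_sub => i _; apply: submx_trans (submxMl _ _) (rowsub_sub _ _).
Qed.

End GlueRows.

Theorem lemma5
  (n rX rZ q kc kg : nat)
  (HX : 'M[F2]_(rX, n)) (HZ : 'M[F2]_(rZ, n))
  (JX JZ : 'M[F2]_(q + kc, n)) (FX FZ : 'M[F2]_(kg, n))
  (hkerX : (kermx HX^T == col_mx (col_mx HZ JZ) FZ)%MS)
  (hdirX : mxdirect (<<HZ>> + <<JZ>> + <<FZ>>)%MS)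
  (hkerZ : (kermx HZ^T == col_mx (col_mx HX JX) FX)%MS)
  (hdirZ : mxdirect (<<HX>> + <<JX>> + <<FX>>)%MS)
  (hJ : JX *m JZ^T = 1%:M) (hF : FX *m FZ^T = 1%:M)
  (JZA : 'M[F2]_(q, n)) (JZC : 'M[F2]_(kc, n))
  (hJZA_free : row_free JZA) (hJZA_sub : (JZA <= JZ)%MS)
  (Jbar : 'M[F2]_(q + kc)) (hJbar_unit : Jbar \in unitmx)
  (hJbar : col_mx JZA JZC = Jbar *m JZ)
  (JXA : 'M[F2]_(q, n)) (JXC : 'M[F2]_(kc, n))
  (hJXAC : col_mx JXA JXC = (invmx Jbar)^T *m JX)
  (nG rG : nat) (HG : 'M[F2]_(rG, nG)) (S : 'M[F2]_(nG, n)) (T : 'M[F2]_(rX, rG))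
  (hcompat : HX *m S^T = T *m HG)
  (hfine : exists (m : nat) (U : 'M[F2]_(m, n)),
      (U <= col_mx HZ FZ)%MS /\ (col_mx JZA U == kermx HG^T *m S)%MS)
  (gamma : 'M[F2]_(kc, rG)) (hgamma : JXC *m S^T = gamma *m HG)
  (dR : nat) (hdR : (2 <= dR)%N) :
  let P := P_MM n nG rG dR in
  (HX == HX_MM dR HX HG T *m P^T)%MS /\
  (HZ *m P <= HZ_MM dR HZ HG S)%MS /\
  (JXC == JX_MM dR JXC S gamma *m P^T)%MS /\
  (JZC *m P == JZ_MM (nG:=nG) (rG:=rG) dR JZC)%MS /\
  (JZA *m P <= HZ_MM dR HZ HG S)%MS.
Proof.
move=> P; split; first by rewrite HX_MM_trP -!addsmxE !addsmx0 submx_refl.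
split.
  by rewrite -(usubmx_HZ_MM dR HZ HG S) -{2}(vsubmxK (HZ_MM _ _ _ _)) -addsmxE addsmxSl.
split; first by rewrite JX_MM_trP submx_refl.
split; first by rewrite JZ_MM_P submx_refl.
have [m [U [_ /andP [hJZA_U _]]]] := hfine.
have /submxP [D ->] : (JZA <= kermx HG^T *m S)%MS.
  by apply: submx_trans hJZA_U; rewrite -addsmxE addsmxSl.
apply/row_subP => r; rewrite !row_mul mulmxA -row_mul.
apply: kerHG_lift_sub_HZ_MM; first exact: leq_trans hdR.
by rewrite -row_mul -mulmxA mulmx_ker mulmx0 row0.
Qed.
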